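(* Let $H\ge1$, $m\ge1$ be integers, let $\Phi\in\mathbb{R}^{|\mathcal S|\times d}$ be a feature matrix (row $s$ is $\phi(s)^\top$), and let $\mathcal D\subseteq\mathcal S$ be a fixed set of states such that the submatrix $\Phi_{\mathcal D}$ (rows of $\Phi$ indexed by $\mathcal D$) has rank $d$. Let $\mathcal P\in\{0,1\}^{|\mathcal D|\times|\mathcal S|}$ be the matrix selecting the coordinates in $\mathcal D$ (in the same order as the rows of $\Phi_{\mathcal D}$), and $\mathcal M:=\Phi(\Phi_{\mathcal D}^\top\Phi_{\mathcal D})^{-1}\Phi_{\mathcal D}^\top\mathcal P$. Given $\theta_0\in\mathbb{R}^d$, define iteratively: let $(\mu_{k+1},\nu_{k+1})$ be any pair of stationary randomized policies with $T_{\mu_{k+1},\nu_{k+1}}(T^{H-1}\Phi\theta_k)=T^H\Phi\theta_k$, and let $\theta_{k+1}$ be the least-squares solution $$\theta_{k+1}=\arg\min_\theta\sum_{s\in\mathcal D}\Big((\Phi\theta)(s)-\big(T^m_{\mu_{k+1},\nu_{k+1}}T^{H-1}\Phi\theta_k\big)(s)\Big)^2,$$ so that $\Phi\theta_{k+1}=\mathcal M\,T^m_{\mu_{k+1},\nu_{k+1}}T^{H-1}\Phi\theta_k$. Let $\delta_{FV}:=\|\mathcal M\|_\infty$ (induced $\infty$-norm) and $\delta_{app}:=\sup_{k\ge1}\|J^{\mu_k,\nu_k}-\mathcal M J^{\mu_k,\nu_k}\|_\infty$, and suppose $$\kappa:=\alpha^{H-1}+\frac{(\delta_{FV}\alpha^{m+H-1}+\alpha^{H-1})(1+\alpha)}{1-\alpha}<1.$$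 Then for all $k\ge0$, $$\|\Phi\theta_k-J^*\|_\infty\le\kappa^k\|\Phi\theta_0-J^*\|_\infty+\frac{\delta_{app}}{1-\kappa},$$ and hence $\limsup_{k\to\infty}\|\Phi\theta_k-J^*\|_\infty\le\frac{\delta_{app}}{1-\kappa}$.
   Context: A two-player zero-sum discounted Markov game has a finite state space $\mathcal S$, finite action sets $\mathcal U(s)$ (maximizer) and $\mathcal V(s)$ (minimizer) at each state $s$, transition probabilities $P(s'|s,u,v)$, reward $g(s,u,v)\in[0,1]$, and discount factor $\alpha\in(0,1)$. A (stationary randomized) policy pair $(\mu,\nu)$ assigns to each $s$ distributions $\mu(s)\in\Delta(\mathcal U(s))$, $\nu(s)\in\Delta(\mathcal V(s))$. For $V\in\mathbb{R}^{|\mathcal S|}$ and $s\in\mathcal S$ let $A_{V,s}(u,v)=g(s,u,v)+\alpha\sum_{s'}P(s'|s,u,v)V(s')$. Define $T_{\mu,\nu}V(s)=\mu(s)^\top A_{V,s}\nu(s)$ and the Bellman operator $TV(s)=\max_{p\in\Delta(\mathcal U(s))}\min_{q\in\Delta(\mathcal V(s))}p^\top A_{V,s}q$. $J^{\mu,\nu}$ is the unique fixed point of $T_{\mu,\nu}$ and $J^*$ the unique fixed point of $T$ (the Nash equilibrium value). $T^j$, $T^j_{\mu,\nu}$ denote $j$-fold compositions, $T^0$ the identity. *)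

From HB Require Import structures.
From mathcomp Require Import all_boot all_order all_algebra.
From mathcomp Require Import all_classical all_reals.
From mathcomp Require Import topology normedtype sequences.
Set Implicit Arguments. Unset Strict Implicit. Unset Printing Implicit Defensive.
Import Order.TTheory GRing.Theory Num.Theory.
Local Open Scope ring_scope.
Local Open Scope classical_set_scope.

Section Game.
Variable R : realType.

Definition is_dist (A : finType) (p : {ffun A -> R}) : Prop :=
  (forall a, 0 <= p a) /\ \sum_(a : A) p a = 1.

Definition vnorm (k : nat) (v : 'cV[R]_k) : R := \big[Num.max/0]_(i < k) `|v i 0|.

Definition mnorm_inf (p q : nat) (M : 'M[R]_(p, q)) : R :=
  sup [set x | exists v : 'cV[R]_q, vnorm v <= 1 /\ x = vnorm (M *m v)].

Definition Amat (n : nat) (U W : 'I_n -> finType)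
  (P : forall s, U s -> W s -> 'I_n -> R) (g : forall s, U s -> W s -> R)
  (alpha : R) (V : 'cV[R]_n) (s : 'I_n) (u : U s) (w : W s) : R :=
  g s u w + alpha * \sum_(s' < n) P s u w s' * V s' 0.

Definition bilin (A : finType) (B : finType) (p : {ffun A -> R}) (M : A -> B -> R)
  (q : {ffun B -> R}) : R := \sum_(a : A) \sum_(b : B) p a * M a b * q b.

Definition Tpol (n : nat) (U W : 'I_n -> finType)
  (P : forall s, U s -> W s -> 'I_n -> R) (g : forall s, U s -> W s -> R)
  (alpha : R) (mu : forall s, {ffun U s -> R}) (nu : forall s, {ffun W s -> R})
  (V : 'cV[R]_n) : 'cV[R]_n :=
  \col_(s < n) bilin (mu s) (@Amat n U W P g alpha V s) (nu s).

Definition Tbell (n : nat) (U W : 'I_n -> finType)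
  (P : forall s, U s -> W s -> 'I_n -> R) (g : forall s, U s -> W s -> R)
  (alpha : R) (V : 'cV[R]_n) : 'cV[R]_n :=
  \col_(s < n) sup [set x | exists p : {ffun U s -> R}, is_dist p /\
      x = inf [set y | exists q : {ffun W s -> R}, is_dist q /\
                 y = bilin p (@Amat n U W P g alpha V s) q]].

End Game.

From HB Require Import structures.
From mathcomp Require Import all_boot all_order all_algebra.
From mathcomp Require Import all_classical all_reals.
From mathcomp Require Import topology normedtype sequences.
From mathcomp Require Import ring lra.
Import Order.TTheory GRing.Theory Num.Theory.
Import numFieldNormedType.Exports.
Set Implicit Arguments. Unset Strict Implicit. Unset Printing Implicit Defensive.
Local Open Scope ring_scope.
Local Open Scope classical_set_scope.

(* The argument is a contraction argument in the sup norm [vnorm]: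
   - the policy operators T_{mu,nu} and the Shapley operator T are
     alpha-Lipschitz ([Tpol_lipschitz], [Tbell_lipschitz]); for T this holds
     because a max-min value moves by at most c when every payoff does
     ([supinf_le_shift]);
   - for abstract alpha-Lipschitz operators F (a policy) and G (Bellman)
     with fixed points Jp, J* and F V = G V, one projected evaluation step
     satisfies |M F^m V - J*| <= step_factor * |V - J*| + |Jp - M Jp|
     ([projected_step_error]), and step_factor * alpha^(H-1) <= kappa;
   - the least-squares fit is exactly the linear projection M of the
     theorem, because the sampled Gram matrix is invertible
     ([sampled_least_squares]);
   - hence e_{k+1} <= kappa e_k + delta_app for e_k = |Phi theta_k - J*|,
     which unrolls to the stated bound ([affine_recursion_bound]) and gives
     the limsup bound by comparison with a convergent sequence
     ([limn_sup_le_cvg]). *)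

Section SupNorm.
Variables (R : realType) (k : nat).
Implicit Types (u v : 'cV[R]_k).

Lemma vnorm_le v c : 0 <= c -> (forall i, `|v i 0| <= c) -> vnorm v <= c.
Proof. by move=> c0 h; apply: bigmax_le. Qed.

Lemma ler_vnorm v i : `|v i 0| <= vnorm v.
Proof. exact: (le_bigmax _ (fun j => `|v j 0|)). Qed.

Lemma vnorm_ge0 v : 0 <= vnorm v.
Proof. by apply: (big_ind (fun x => 0 <= x)) => // x y hx hy; rewrite le_max hx. Qed.

Lemma vnorm0 : vnorm (0 : 'cV[R]_k) = 0.
Proof.
by apply/eqP; rewrite eq_le vnorm_ge0 andbT vnorm_le // => i; rewrite mxE normr0.
Qed.

Lemma vnormD u v : vnorm (u + v) <= vnorm u + vnorm v.
Proof.
apply: vnorm_le => [|i]; first by rewrite addr_ge0 ?vnorm_ge0.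
by rewrite mxE (le_trans (ler_normD _ _)) // lerD ?ler_vnorm.
Qed.

Lemma vnormN v : vnorm (- v) = vnorm v.
Proof. by apply: eq_bigr => i _; rewrite mxE normrN. Qed.

Lemma vnormC u v : vnorm (u - v) = vnorm (v - u).
Proof. by rewrite -opprB vnormN. Qed.

Lemma vnorm_tri u v w : vnorm (u - w) <= vnorm (u - v) + vnorm (v - w).
Proof. by have := vnormD (u - v) (v - w); rewrite addrA subrK. Qed.

End SupNorm.

Section InducedNorm.
Variables (R : realType) (p q : nat) (M : 'M[R]_(p, q)).

(* The entrywise l1 norm bounds M as an operator; it makes the set in
   [mnorm_inf] bounded, so that its supremum is meaningful. *)
Lemma vnorm_mulmx_l1 v : vnorm (M *m v) <= (\sum_i \sum_j `|M i j|) * vnorm v.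
Proof.
have l1_ge0 i : 0 <= \sum_j `|M i j| by rewrite sumr_ge0.
apply: vnorm_le => [|i]; first by rewrite mulr_ge0 ?vnorm_ge0 ?sumr_ge0.
rewrite mxE (le_trans (ler_norm_sum _ _ _)) //.
apply: (@le_trans _ _ ((\sum_j `|M i j|) * vnorm v)).
  by rewrite mulr_suml ler_sum // => j _; rewrite normrM ler_wpM2l ?ler_vnorm.
by rewrite ler_wpM2r ?vnorm_ge0 // (bigD1 i) //= lerDl sumr_ge0.
Qed.

Lemma mnorm_ubound :
  has_ubound [set x | exists v : 'cV[R]_q, vnorm v <= 1 /\ x = vnorm (M *m v)].
Proof.
exists (\sum_i \sum_j `|M i j|) => _ [v [hv ->]].
rewrite (le_trans (vnorm_mulmx_l1 v)) // ler_piMr //.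
by rewrite sumr_ge0 // => i _; rewrite sumr_ge0.
Qed.

Lemma mnorm_ge0 : 0 <= mnorm_inf M.
Proof.
apply: le_trans (ub_le_sup mnorm_ubound _); first exact: (vnorm_ge0 (M *m 0)).
by exists 0; rewrite vnorm0.
Qed.

Lemma mnorm_bound v : vnorm (M *m v) <= mnorm_inf M * vnorm v.
Proof.
have [v0|v0] := eqVneq (vnorm v) 0.
  by rewrite (le_trans (vnorm_mulmx_l1 v)) // v0 !mulr0.
have vpos : 0 < vnorm v by rewrite lt0r v0 vnorm_ge0.
have vinv0 : 0 <= (vnorm v)^-1 by rewrite invr_ge0 ltW.
pose w := (vnorm v)^-1 *: v.
have w_le1 : vnorm w <= 1.
  apply: vnorm_le => // i; rewrite mxE normrM (ger0_norm vinv0).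
  by rewrite -(mulVf v0) ler_wpM2l ?ler_vnorm.
have Mw_le : vnorm (M *m w) <= mnorm_inf M.
  by apply: ub_le_sup; [exact: mnorm_ubound | exists w].
have -> : M *m v = vnorm v *: (M *m w) by rewrite scalemxAr scalerA mulfV // scale1r.
apply: vnorm_le => [|i]; first by rewrite mulr_ge0 ?mnorm_ge0 ?ltW.
rewrite mxE normrM (ger0_norm (ltW vpos)) mulrC ler_wpM2r ?(ltW vpos) //.
exact: le_trans (ler_vnorm _ i) Mw_le.
Qed.

End InducedNorm.

Lemma projection_error_le (R : realType) n (M : 'M[R]_n) (J : 'cV[R]_n) :
  vnorm (J - M *m J) <= (1 + mnorm_inf M) * vnorm J.
Proof.
rewrite mulrDl mul1r (le_trans (vnormD _ _)) // lerD2l.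
by rewrite vnormN mnorm_bound.
Qed.

Section Contraction.
Variables (R : realType) (k : nat).

Definition lipschitz_sup (a : R) (F : 'cV[R]_k -> 'cV[R]_k) : Prop :=
  forall V V', vnorm (F V - F V') <= a * vnorm (V - V').

Lemma iter_lipschitz a F J j V : 0 <= a -> lipschitz_sup a F -> F J = J ->
  vnorm (iter j F V - J) <= a ^+ j * vnorm (V - J).
Proof.
move=> a0 hF hJ; elim: j => [|j IH]; first by rewrite expr0 mul1r.
rewrite iterS -{1}hJ (le_trans (hF _ _)) // exprS -mulrA ler_wpM2l //.
Qed.

End Contraction.

Section Averages.
Variable R : realType.

Lemma exists_dist (A : finType) : (0 < #|A|)%N -> exists p : {ffun A -> R}, is_dist p.
Proof.
case/card_gt0P => a0 _; exists [ffun a => (a == a0)%:R]; split=> [a|].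
  by rewrite ffunE ler0n.
rewrite (bigD1 a0) //= big1 => [|a /negbTE]; rewrite ffunE ?eqxx ?addr0 //.
by move=> ->.
Qed.

Lemma bilinB (A B : finType) (p : {ffun A -> R}) (M1 M2 : A -> B -> R) q :
  bilin p M1 q - bilin p M2 q = bilin p (fun a b => M1 a b - M2 a b) q.
Proof.
rewrite /bilin -sumrB; apply: eq_bigr => a _; rewrite -sumrB.
by apply: eq_bigr => b _; ring.
Qed.

Lemma bilin_bound (A B : finType) (p : {ffun A -> R}) (M : A -> B -> R) q c :
  is_dist p -> is_dist q -> (forall a b, `|M a b| <= c) -> `|bilin p M q| <= c.
Proof.
move=> [p0 p1] [q0 q1] hM; rewrite (le_trans (ler_norm_sum _ _ _)) //.
apply: (@le_trans _ _ (\sum_a \sum_b p a * c * q b)).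
  apply: ler_sum => a _; rewrite (le_trans (ler_norm_sum _ _ _)) //.
  apply: ler_sum => b _; rewrite !normrM (ger0_norm (p0 a)) (ger0_norm (q0 b)).
  by rewrite ler_wpM2r // ler_wpM2l.
under eq_bigr do rewrite -mulr_sumr q1 mulr1.
by rewrite -mulr_suml p1 mul1r.
Qed.

Lemma wavg_bound n (w x : 'I_n -> R) c :
  (forall s, 0 <= w s) -> \sum_s w s = 1 -> (forall s, `|x s| <= c) ->
  `|\sum_s w s * x s| <= c.
Proof.
move=> w0 w1 hx; rewrite (le_trans (ler_norm_sum _ _ _)) //.
apply: (@le_trans _ _ (\sum_s w s * c)); last by rewrite -mulr_suml w1 mul1r.
by apply: ler_sum => s _; rewrite normrM ger0_norm // ler_wpM2l.
Qed.

End Averages.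

Section SupInf.
Variables (R : realType) (X Y : Type) (DX : X -> Prop) (DY : Y -> Prop).
Hypotheses (DX_ne : exists x, DX x) (DY_ne : exists y, DY y).

Lemma inf_norm_le (f : Y -> R) B : (forall y, DY y -> `|f y| <= B) ->
  `|inf [set z | exists y, DY y /\ z = f y]| <= B.
Proof.
have [y0 Dy0] := DY_ne; move=> hf; have /andP[_ fy0B] : -B <= f y0 <= B.
  by rewrite -ler_norml hf.
rewrite ler_norml; apply/andP; split.
  apply: lb_le_inf => [|_ [y [Dy ->]]]; first by exists (f y0), y0.
  by have := hf y Dy; rewrite ler_norml => /andP[].
apply: le_trans fy0B; apply: ge_inf; last by exists y0.
by exists (-B) => _ [y [Dy ->]]; have := hf y Dy; rewrite ler_norml => /andP[].
Qed.

Lemma inf_le_shift (f f' : Y -> R) B c :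
  (forall y, DY y -> `|f y| <= B) -> (forall y, DY y -> f y <= f' y + c) ->
  inf [set z | exists y, DY y /\ z = f y] <= inf [set z | exists y, DY y /\ z = f' y] + c.
Proof.
have [y0 Dy0] := DY_ne; move=> hf hff'; rewrite -lerBlDr.
apply: lb_le_inf => [|_ [y [Dy ->]]]; first by exists (f' y0), y0.
rewrite lerBlDr (le_trans _ (hff' y Dy)) //; apply: ge_inf; last by exists y.
by exists (-B) => _ [y' [Dy' ->]]; have := hf y' Dy'; rewrite ler_norml => /andP[].
Qed.

Lemma sup_le_shift (f f' : X -> R) B c :
  (forall x, DX x -> `|f' x| <= B) -> (forall x, DX x -> f x <= f' x + c) ->
  sup [set z | exists x, DX x /\ z = f x] <= sup [set z | exists x, DX x /\ z = f' x] + c.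
Proof.
have [x0 Dx0] := DX_ne; move=> hf' hff'.
apply: ge_sup => [|_ [x [Dx ->]]]; first by exists (f x0), x0.
rewrite (le_trans (hff' x Dx)) // lerD2r; apply: ub_le_sup; last by exists x.
by exists B => _ [x' [Dx' ->]]; have := hf' x' Dx'; rewrite ler_norml => /andP[].
Qed.

Lemma supinf_le_shift (f f' : X -> Y -> R) B c :
  (forall x y, DX x -> DY y -> `|f x y| <= B /\ `|f' x y| <= B) ->
  (forall x y, DX x -> DY y -> f x y <= f' x y + c) ->
  sup [set z | exists x, DX x /\ z = inf [set w | exists y, DY y /\ w = f x y]]
  <= sup [set z | exists x, DX x /\ z = inf [set w | exists y, DY y /\ w = f' x y]] + c.
Proof.
move=> hB hff'; apply: (@sup_le_shift _ _ B) => x Dx.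
  by apply: inf_norm_le => y Dy; case: (hB x y Dx Dy).
by apply: (@inf_le_shift _ _ B) => [y Dy|y Dy]; [case: (hB x y Dx Dy) | exact: hff'].
Qed.

End SupInf.

Section Game.
Variables (R : realType) (n : nat) (U W : 'I_n -> finType).
Variables (P : forall s, U s -> W s -> 'I_n -> R) (g : forall s, U s -> W s -> R).
Arguments P : clear implicits.
Arguments g : clear implicits.
Variable alpha : R.
Hypotheses (hP0 : forall s u w s', 0 <= P s u w s')
  (hP1 : forall s u w, \sum_(s' < n) P s u w s' = 1)
  (hg : forall s u w, 0 <= g s u w <= 1) (alpha_ge0 : 0 <= alpha).

Lemma Amat_lipschitz V V' (s : 'I_n) (u : U s) (w : W s) :
  `|Amat P g alpha V u w - Amat P g alpha V' u w| <= alpha * vnorm (V - V').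
Proof.
rewrite /Amat opprD addrACA subrr add0r -mulrBr -sumrB normrM ger0_norm //.
rewrite ler_wpM2l //; under eq_bigr do rewrite -mulrBr.
by apply: wavg_bound => // s'; have := ler_vnorm (V - V') s'; rewrite !mxE.
Qed.

Lemma Amat_bound V (s : 'I_n) (u : U s) (w : W s) :
  `|Amat P g alpha V u w| <= 1 + alpha * vnorm V.
Proof.
rewrite /Amat (le_trans (ler_normD _ _)) // lerD //.
  by have /andP[g0 g1] := @hg s u w; rewrite ger0_norm.
rewrite normrM ger0_norm // ler_wpM2l //.
by apply: wavg_bound => // s'; exact: ler_vnorm.
Qed.

Section Policy.
Variables (mu : forall s, {ffun U s -> R}) (nu : forall s, {ffun W s -> R}).
Hypotheses (hmu : forall s, is_dist (mu s)) (hnu : forall s, is_dist (nu s)).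

Lemma Tpol_lipschitz : lipschitz_sup alpha (Tpol P g alpha mu nu).
Proof.
move=> V V'; apply: vnorm_le => [|s]; first by rewrite mulr_ge0 ?vnorm_ge0.
by rewrite !mxE bilinB; apply: bilin_bound => // a b; exact: Amat_lipschitz.
Qed.

Lemma Tpol_fixpoint_norm J : alpha < 1 -> Tpol P g alpha mu nu J = J ->
  vnorm J <= (1 - alpha)^-1.
Proof.
move=> alpha_lt1 hJ; have J_le : vnorm J <= 1 + alpha * vnorm J.
  rewrite -{1}hJ; apply: vnorm_le => [|s]; first by rewrite addr_ge0 ?mulr_ge0 ?vnorm_ge0.
  by rewrite mxE; apply: bilin_bound => // a b; exact: Amat_bound.
by rewrite -div1r ler_pdivlMr ?subr_gt0 //; lra.
Qed.

Lemma Tpol_projection_error_bound (M : 'M[R]_n) J :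
  alpha < 1 -> Tpol P g alpha mu nu J = J ->
  vnorm (J - M *m J) <= (1 + mnorm_inf M) * (1 - alpha)^-1.
Proof.
move=> alpha_lt1 hJ; rewrite (le_trans (projection_error_le _ _)) //.
by rewrite ler_wpM2l ?addr_ge0 ?mnorm_ge0 ?Tpol_fixpoint_norm.
Qed.

End Policy.

Hypotheses (hU : forall s, (0 < #|U s|)%N) (hW : forall s, (0 < #|W s|)%N).

(* Each entry of T V is a max-min value of the bounded game A_{V,s}, whose
   payoffs move by at most alpha |V - V'| when V changes. *)
Lemma Tbell_le V V' s :
  Tbell P g alpha V s 0 <= Tbell P g alpha V' s 0 + alpha * vnorm (V - V').
Proof.
rewrite !mxE; apply: (@supinf_le_shift _ _ _ _ _ (exists_dist R (hU s))
  (exists_dist R (hW s)) _ _ (1 + alpha * (vnorm V + vnorm V'))) => p q hp hq.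
  split; apply: bilin_bound => // a b; rewrite (le_trans (Amat_bound _ _ _)) //.
    by rewrite lerD2l ler_wpM2l // lerDl vnorm_ge0.
  by rewrite lerD2l ler_wpM2l // lerDr vnorm_ge0.
rewrite -lerBlDl (le_trans (ler_norm _)) // bilinB.
by apply: bilin_bound => // a b; exact: Amat_lipschitz.
Qed.

Lemma Tbell_lipschitz : lipschitz_sup alpha (Tbell P g alpha).
Proof.
move=> V V'; apply: vnorm_le => [|s]; first by rewrite mulr_ge0 ?vnorm_ge0.
have := Tbell_le V V' s; have := Tbell_le V' V s; rewrite vnormC !mxE.
by rewrite ler_norml => h1 h2; apply/andP; split; lra.
Qed.

End Game.

(* Contraction factor of one approximate policy iteration step, for
   discount alpha, projection norm delta and m evaluation steps. *)
Definition step_factor (R : numFieldType) (alpha delta : R) (m : nat) : R :=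
  (delta * alpha ^+ m * (1 + alpha) + 2 * alpha) / (1 - alpha).

Lemma step_factor_ge0 (R : realFieldType) (alpha delta : R) m :
  0 <= alpha < 1 -> 0 <= delta -> 0 <= step_factor alpha delta m.
Proof.
move=> /andP[alpha_ge0 alpha_lt1] delta_ge0.
by rewrite divr_ge0 ?subr_ge0 ?(ltW alpha_lt1) // addr_ge0 ?mulr_ge0 ?exprn_ge0 ?addr_ge0.
Qed.

Lemma step_factor_le_kappa (R : realFieldType) (alpha delta : R) m h :
  0 <= alpha < 1 ->
  step_factor alpha delta m * alpha ^+ h
  <= alpha ^+ h + (delta * alpha ^+ (m + h) + alpha ^+ h) * (1 + alpha) / (1 - alpha).
Proof.
move=> /andP[alpha_ge0 alpha_lt1]; rewrite -subr_ge0.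
have -> : alpha ^+ h + (delta * alpha ^+ (m + h) + alpha ^+ h) * (1 + alpha) / (1 - alpha)
          - step_factor alpha delta m * alpha ^+ h = 2 * alpha ^+ h.
  by rewrite /step_factor exprD; field; rewrite subr_eq0 eq_sym lt_eqF.
by rewrite mulr_ge0 ?exprn_ge0.
Qed.

Section ApproximatePolicyIterationStep.
Variables (R : realType) (n : nat) (alpha : R).
Hypotheses (alpha_ge0 : 0 <= alpha) (alpha_lt1 : alpha < 1).
Variables (F G : 'cV[R]_n -> 'cV[R]_n) (Jp Jstar V : 'cV[R]_n).
Hypotheses (F_lip : lipschitz_sup alpha F) (G_lip : lipschitz_sup alpha G).
Hypotheses (F_Jp : F Jp = Jp) (G_Jstar : G Jstar = Jstar) (greedy : F V = G V).

(* F plays the policy operator, G the Bellman operator and Jp, Jstar their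
   fixed points: the value of a policy that is greedy for V is within
   2 alpha / (1 - alpha) * |V - J*| of the optimal value. *)
Lemma greedy_value_error :
  vnorm (Jp - Jstar) <= 2 * alpha / (1 - alpha) * vnorm (V - Jstar).
Proof.
have decomp : Jp - Jstar = (F Jp - F V) + (G V - G Jstar).
  by rewrite F_Jp greedy G_Jstar addrA subrK.
have h1 : vnorm (Jp - Jstar) <= alpha * vnorm (Jp - V) + alpha * vnorm (V - Jstar).
  by rewrite {1}decomp (le_trans (vnormD _ _)) // lerD.
have h2 : alpha * vnorm (Jp - V) <= alpha * (vnorm (Jp - Jstar) + vnorm (V - Jstar)).
  by rewrite ler_wpM2l // (le_trans (vnorm_tri _ Jstar _)) // (vnormC Jstar).
by rewrite mulrAC ler_pdivlMr ?subr_gt0 //; lra.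
Qed.

Lemma greedy_policy_distance :
  vnorm (V - Jp) <= (1 + alpha) / (1 - alpha) * vnorm (V - Jstar).
Proof.
have -> : (1 + alpha) / (1 - alpha) * vnorm (V - Jstar)
          = vnorm (V - Jstar) + 2 * alpha / (1 - alpha) * vnorm (V - Jstar).
  by field; rewrite subr_eq0 eq_sym lt_eqF.
by rewrite (le_trans (vnorm_tri _ Jstar _)) // lerD2l vnormC greedy_value_error.
Qed.

Lemma projected_step_error (M : 'M[R]_n) m :
  vnorm (M *m iter m F V - Jstar)
  <= step_factor alpha (mnorm_inf M) m * vnorm (V - Jstar) + vnorm (Jp - M *m Jp).
Proof.
rewrite /step_factor; set Y := iter m F V; set b := vnorm (V - Jstar).
have decomp : M *m Y - Jstar = M *m (Y - Jp) + ((M *m Jp - Jp) + (Jp - Jstar)).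
  by rewrite mulmxBr !addrA !subrK.
have hY : mnorm_inf M * vnorm (Y - Jp)
          <= mnorm_inf M * alpha ^+ m * ((1 + alpha) / (1 - alpha) * b).
  rewrite -mulrA ler_wpM2l ?mnorm_ge0 // (le_trans (iter_lipschitz m V alpha_ge0 F_lip F_Jp)) //.
  by rewrite ler_wpM2l ?exprn_ge0 ?greedy_policy_distance.
have hJp : vnorm (Jp - Jstar) <= 2 * alpha / (1 - alpha) * b := greedy_value_error.
have -> : (mnorm_inf M * alpha ^+ m * (1 + alpha) + 2 * alpha) / (1 - alpha) * b
    = mnorm_inf M * alpha ^+ m * ((1 + alpha) / (1 - alpha) * b)
      + 2 * alpha / (1 - alpha) * b.
  by field; rewrite subr_eq0 eq_sym lt_eqF.
rewrite decomp (le_trans (vnormD _ _)) // (le_trans (lerD (mnorm_bound _ _) (vnormD _ _))) //.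
by rewrite [vnorm (M *m Jp - Jp)]vnormC; lra.
Qed.

End ApproximatePolicyIterationStep.

Section LeastSquares.
Variables (R : realType) (p d : nat).

Definition sqnorm (v : 'cV[R]_p) : R := \sum_i v i 0 ^+ 2.

Lemma dotmxE (u v : 'cV[R]_p) : (u^T *m v) 0 0 = \sum_i u i 0 * v i 0.
Proof. by rewrite mxE; apply: eq_bigr => i _; rewrite mxE. Qed.

Lemma sqnorm_eq0 v : sqnorm v <= 0 -> v = 0.
Proof.
move=> v_le0; have sum0 : sqnorm v = 0.
  by apply/eqP; rewrite eq_le v_le0 sumr_ge0 // => i _; rewrite sqr_ge0.
have v2_0 := psumr_eq0P (fun i _ => sqr_ge0 (v i 0)) sum0.
by apply/matrixP => i j; rewrite (ord1 j) mxE; apply/eqP; rewrite -sqrf_eq0 v2_0.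
Qed.

Lemma sqnormD_orth u v : u^T *m v = 0 -> sqnorm (u + v) = sqnorm u + sqnorm v.
Proof.
move=> uv0; have cross : \sum_i u i 0 * v i 0 = 0 by rewrite -dotmxE uv0 mxE.
transitivity (\sum_i (u i 0 ^+ 2 + v i 0 ^+ 2) + 2 * \sum_i u i 0 * v i 0).
  by rewrite /sqnorm mulr_sumr -big_split; apply: eq_bigr => i _; rewrite mxE /=; ring.
by rewrite cross mulr0 addr0 big_split.
Qed.

Lemma gram_unit (A : 'M[R]_(p, d)) : \rank A = d -> A^T *m A \in unitmx.
Proof.
move=> rankA; rewrite -row_free_unit; apply: inj_row_free => v vAA0.
have Av0 : A *m v^T = 0.
  apply: sqnorm_eq0; rewrite /sqnorm.
  under eq_bigr do rewrite expr2; rewrite -dotmxE trmx_mul trmxK.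
  by rewrite mulmxA -(mulmxA v) vAA0 mul0mx mxE.
have rowfree : row_free A^T by rewrite /row_free mxrank_tr rankA.
by apply: (row_free_inj rowfree); rewrite mul0mx -[v]trmxK -trmx_mul Av0 trmx0.
Qed.

Lemma least_squares_normal (A : 'M[R]_(p, d)) (b : 'cV[R]_p) t :
  \rank A = d -> (forall th, sqnorm (A *m t - b) <= sqnorm (A *m th - b)) ->
  t = invmx (A^T *m A) *m A^T *m b.
Proof.
move=> rankA tmin; have Gunit := gram_unit rankA.
set ts := invmx (A^T *m A) *m A^T *m b.
have normal_eq : A^T *m (A *m ts - b) = 0.
  by rewrite mulmxBr /ts !mulmxA mulmxV // mul1mx subrr.
have pyth : sqnorm (A *m t - b) = sqnorm (A *m (t - ts)) + sqnorm (A *m ts - b).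
  rewrite -sqnormD_orth; first by rewrite mulmxBr addrA subrK.
  by rewrite trmx_mul -mulmxA normal_eq mulmx0.
have A_diff0 : A *m (t - ts) = 0.
  by apply: sqnorm_eq0; have := tmin ts; rewrite pyth; lra.
apply/eqP; rewrite -subr_eq0; apply/eqP.
by rewrite -[t - ts]mul1mx -(mulVmx Gunit) -mulmxA -mulmxA A_diff0 !mulmx0.
Qed.

End LeastSquares.

Lemma sampled_least_squares (R : realType) n d p (Phi : 'M[R]_(n, d))
  (idx : 'I_p -> 'I_n) (Y : 'cV[R]_n) (t : 'cV[R]_d) :
  \rank (\matrix_(i < p, j < d) Phi (idx i) j) = d ->
  (forall th : 'cV[R]_d, \sum_(i < p) ((Phi *m t) (idx i) 0 - Y (idx i) 0) ^+ 2
     <= \sum_(i < p) ((Phi *m th) (idx i) 0 - Y (idx i) 0) ^+ 2) ->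
  Phi *m t = Phi *m invmx ((\matrix_(i < p, j < d) Phi (idx i) j)^T
                            *m \matrix_(i < p, j < d) Phi (idx i) j)
       *m (\matrix_(i < p, j < d) Phi (idx i) j)^T
       *m (\matrix_(i < p, s < n) (if idx i == s then 1 else 0 : R)) *m Y.
Proof.
set PhiD := \matrix_(i < p, j < d) Phi (idx i) j.
set Psel := \matrix_(i < p, s < n) (if idx i == s then 1 else 0 : R).
have residualE th : \sum_(i < p) ((Phi *m th) (idx i) 0 - Y (idx i) 0) ^+ 2
                    = sqnorm (PhiD *m th - Psel *m Y).
  apply: eq_bigr => i _; rewrite !mxE; congr ((_ - _) ^+ 2).
    by apply: eq_bigr => j _; rewrite mxE.
  rewrite (bigD1 (idx i)) //= big1 => [|s]; rewrite mxE ?eqxx ?mul1r ?addr0 //.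
  by rewrite eq_sym => /negbTE ->; rewrite mul0r.
move=> rankD tmin; rewrite {1}(least_squares_normal rankD (b := Psel *m Y) (t := t)).
  by rewrite !mulmxA.
by move=> th; rewrite -!residualE.
Qed.

Section Asymptotics.
Variable R : realType.

Lemma affine_recursion_bound (e : nat -> R) (kappa c : R) :
  0 <= kappa < 1 -> 0 <= c -> (forall k, e k.+1 <= kappa * e k + c) ->
  forall k, e k <= kappa ^+ k * e 0%N + c / (1 - kappa).
Proof.
move=> /andP[kappa_ge0 kappa_lt1] c_ge0 step.
elim=> [|k IH]; first by rewrite expr0 mul1r lerDl divr_ge0 // subr_ge0 ltW.
have -> : kappa ^+ k.+1 * e 0%N + c / (1 - kappa)
          = kappa * (kappa ^+ k * e 0%N + c / (1 - kappa)) + c.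
  by rewrite exprS; field; rewrite subr_eq0 eq_sym lt_eqF.
by rewrite (le_trans (step k)) // lerD2r ler_wpM2l.
Qed.

Lemma limn_sup_le_cvg (u v : R^o^nat) (l : R) :
  has_lbound (range u) -> (forall k, u k <= v k) -> v @ \oo --> l -> limn_sup u <= l.
Proof.
move=> u_lb uv v_l.
have v_ub : has_ubound (range v).
  exact: bounded_fun_has_ubound (cvg_seq_bounded (cvgP _ v_l)).
have u_ub : has_ubound (range u).
  by have [b vb] := v_ub; exists b => _ [k _ <-]; rewrite (le_trans (uv k)) // vb.
have sups_v := cvg_sups v_l.
rewrite /limn_sup -(cvg_lim _ sups_v) //.
apply: ler_lim; [exact: cvgP (cvg_sups_inf u_ub u_lb) | exact: cvgP sups_v |].
apply: nearW => k; apply: ge_sup => [|_ [j /= kj <-]]; first by exists (u k), k => /=.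
rewrite (le_trans (uv j)) //; apply: ub_le_sup; last by exists j.
exact: has_ubound_sdrop.
Qed.

Lemma cvg_geometric_shift (kappa e0 c : R) : 0 <= kappa < 1 ->
  (fun k => kappa ^+ k * e0 + c) @ \oo --> (c : R^o).
Proof.
move=> /andP[kappa_ge0 kappa_lt1].
rewrite -[X in _ --> X]add0r -(mul0r e0); apply: cvgD; last exact: cvg_cst.
by apply: cvgM; [apply: cvg_expr; rewrite ger0_norm | exact: cvg_cst].
Qed.

End Asymptotics.

Theorem theorem2 (R : realType) (n : nat)
  (U W : 'I_n -> finType)
  (P : forall s, U s -> W s -> 'I_n -> R) (g : forall s, U s -> W s -> R)
  (alpha : R)
  (hU : forall s, (0 < #|U s|)%N) (hW : forall s, (0 < #|W s|)%N)
  (hP0 : forall s u w s', 0 <= P s u w s')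
  (hP1 : forall s u w, \sum_(s' < n) P s u w s' = 1)
  (hg : forall s u w, 0 <= g s u w <= 1)
  (halpha : 0 < alpha < 1)
  (H m d p : nat) (hH : (1 <= H)%N) (hm : (1 <= m)%N)
  (Phi : 'M[R]_(n, d))
  (idx : 'I_p -> 'I_n) (hidx : injective idx)
  (PhiD := \matrix_(i < p, j < d) Phi (idx i) j)
  (Psel := \matrix_(i < p, s < n) (if idx i == s then 1 else 0 : R))
  (hrank : \rank PhiD = d)
  (Mproj := Phi *m invmx (PhiD^T *m PhiD) *m PhiD^T *m Psel)
  (T := Tbell P g alpha)
  (theta : nat -> 'cV[R]_d)
  (mu : nat -> forall s, {ffun U s -> R}) (nu : nat -> forall s, {ffun W s -> R})
  (hmu : forall k s, is_dist (mu k s)) (hnu : forall k s, is_dist (nu k s))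
  (hgreedy : forall k : nat,
     Tpol P g alpha (mu k.+1) (nu k.+1) (iter H.-1 T (Phi *m theta k))
     = iter H T (Phi *m theta k))
  (hls : forall (k : nat) (th : 'cV[R]_d),
     \sum_(i < p) ((Phi *m theta k.+1) (idx i) 0
        - (iter m (Tpol P g alpha (mu k.+1) (nu k.+1))
                  (iter H.-1 T (Phi *m theta k))) (idx i) 0) ^+ 2
     <= \sum_(i < p) ((Phi *m th) (idx i) 0
        - (iter m (Tpol P g alpha (mu k.+1) (nu k.+1))
                  (iter H.-1 T (Phi *m theta k))) (idx i) 0) ^+ 2)
  (J : nat -> 'cV[R]_n)
  (hJ : forall k, (1 <= k)%N -> Tpol P g alpha (mu k) (nu k) (J k) = J k)
  (Jstar : 'cV[R]_n) (hJstar : T Jstar = Jstar)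
  (delta_FV := mnorm_inf Mproj)
  (delta_app := sup [set x | exists k : nat, (1 <= k)%N /\
                      x = vnorm (J k - Mproj *m J k)])
  (kappa := alpha ^+ H.-1 + (delta_FV * alpha ^+ (m + H.-1) + alpha ^+ H.-1)
                            * (1 + alpha) / (1 - alpha))
  (hkappa : kappa < 1) :
  (forall k : nat,
     vnorm (Phi *m theta k - Jstar)
     <= kappa ^+ k * vnorm (Phi *m theta 0 - Jstar) + delta_app / (1 - kappa))
  /\ limn_sup (fun k => vnorm (Phi *m theta k - Jstar)) <= delta_app / (1 - kappa).
Proof.
have /andP[alpha_gt0 alpha_lt1] := halpha; have alpha_ge0 := ltW alpha_gt0.
have T_lip : lipschitz_sup alpha T := Tbell_lipschitz hP0 hP1 hg alpha_ge0 hU hW.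
have pol_lip k := Tpol_lipschitz g hP0 hP1 alpha_ge0 (hmu k) (hnu k).
have fit k : Phi *m theta k.+1 = Mproj *m iter m (Tpol P g alpha (mu k.+1) (nu k.+1))
                                          (iter H.-1 T (Phi *m theta k)).
  exact: sampled_least_squares hrank (hls k).
have proj_err k : (1 <= k)%N -> vnorm (J k - Mproj *m J k) <= delta_app.
  move=> k_ge1; apply: ub_le_sup; last by exists k.
  exists ((1 + mnorm_inf Mproj) * (1 - alpha)^-1) => _ [j [j_ge1 ->]].
  apply: (Tpol_projection_error_bound hP0 hP1 hg alpha_ge0 (hmu j) (hnu j) Mproj alpha_lt1).
  exact: hJ.
have delta_app_ge0 : 0 <= delta_app := le_trans (vnorm_ge0 _) (proj_err 1%N isT).
have alpha_range : 0 <= alpha < 1 by rewrite alpha_ge0.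
have coef_ge0 := step_factor_ge0 m alpha_range (mnorm_ge0 Mproj).
have coef_kappa := step_factor_le_kappa delta_FV m H.-1 alpha_range.
have kappa_ge0 : 0 <= kappa := le_trans (mulr_ge0 coef_ge0 (exprn_ge0 _ alpha_ge0)) coef_kappa.
pose e k := vnorm (Phi *m theta k - Jstar).
have step k : e k.+1 <= kappa * e k + delta_app.
  set V := iter H.-1 T (Phi *m theta k).
  have greedy : Tpol P g alpha (mu k.+1) (nu k.+1) V = T V.
    by rewrite /V hgreedy -iterS prednK.
  have V_err : vnorm (V - Jstar) <= alpha ^+ H.-1 * e k.
    exact: iter_lipschitz alpha_ge0 T_lip hJstar.
  rewrite /e fit (le_trans (projected_step_error alpha_ge0 alpha_lt1 (pol_lip k.+1) T_lip
                              (hJ k.+1 isT) hJstar greedy _ _)) // lerD ?proj_err //.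
  rewrite (le_trans (ler_wpM2l coef_ge0 V_err)) // mulrA.
  by rewrite ler_wpM2r ?vnorm_ge0.
have kappa_range : 0 <= kappa < 1 by rewrite kappa_ge0 hkappa.
have bound := affine_recursion_bound kappa_range delta_app_ge0 step.
split=> //; apply: limn_sup_le_cvg bound (cvg_geometric_shift (e 0%N) kappa_range).
by exists 0 => _ [k _ <-]; exact: vnorm_ge0.
Qed.
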